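(* Let $q\in\mathbb{C}$ with $0<|q|<1$, and let $a,b,c,d,e$ be complex numbers such that at least one of $a$, $b$, $c$ is of the form $q^n$ with $n\in\{1,2,\ldots\}$ (and such that all terms below are well defined). Then \[ \sum_{k=-\infty}^\infty \frac{(q/a,q/b,q/c,q/d,q/e)_k}{(a,b,c,d,e)_k}(abcdeq^{-3})^k =\frac{(q,ab/q,bc/q,ac/q)_\infty}{(a,b,c,abc/q^2)_\infty} \sum_{k=0}^\infty\frac{(q/a,q/b,q/c,de/q)_k}{(q,q^3/abc,d,e)_k}q^k, \] and \[ \sum_{k=-\infty}^\infty \frac{(q/a,q/b,q/c,q/d,q/e)_k}{(aq,bq,cq,dq,eq)_k}(abcdeq^{-1})^k =\frac{(q,ab,bc,ac)_\infty}{(aq,bq,cq,abc/q)_\infty} \sum_{k=0}^\infty\frac{(q/a,q/b,q/c,de)_k}{(q,q^2/abc,dq,eq)_k}q^k. \]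
   Context: For an integer $n$, the $q$-shifted factorial is $(a)_n=(a;q)_n$ with $(a)_0=1$, $(a)_n=(1-a)(1-aq)\cdots(1-aq^{n-1})$ for $n\ge1$, and $(a)_n=[(1-aq^{-1})(1-aq^{-2})\cdots(1-aq^{n})]^{-1}$ for $n\le -1$. In particular $1/(q)_n=0$ for $n<0$. Also $(a_1,\ldots,a_m)_n=(a_1)_n\cdots(a_m)_n$ and $(a_1,\ldots,a_m)_\infty=\lim_{n\to\infty}(a_1,\ldots,a_m)_n$. *)

From Stdlib Require Import Reals ZArith.
From Coquelicot Require Import Coquelicot.
Open Scope C_scope.

Fixpoint qprod_pos (a q : C) (n : nat) : C :=
  match n with
  | O => 1
  | S m => qprod_pos a q m * (1 - a * Cpow q m)
  end.

Fixpoint qprod_neg (a q : C) (m : nat) : C :=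
  match m with
  | O => 1
  | S m' => qprod_neg a q m' * (1 - a / Cpow q (S m'))
  end.

Definition qpoch (a q : C) (k : Z) : C :=
  match k with
  | Zneg p => / qprod_neg a q (Pos.to_nat p)
  | _ => qprod_pos a q (Z.to_nat k)
  end.

(* 1/(a;q)_k, with the paper's convention: for k < 0 it is the product
   (1-a/q)...(1-a q^k) itself (so e.g. 1/(q)_k = 0 for k < 0). *)
Definition qpoch_rec (a q : C) (k : Z) : C :=
  match k with
  | Zneg p => qprod_neg a q (Pos.to_nat p)
  | _ => / qprod_pos a q (Z.to_nat k)
  end.

Definition qpoch_def (a q : C) (k : Z) : Prop :=
  match k with
  | Zneg p => qprod_neg a q (Pos.to_nat p) <> 0
  | _ => True
  end.

Definition qpoch_rec_def (a q : C) (k : Z) : Prop :=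
  match k with
  | Zneg _ => True
  | _ => qprod_pos a q (Z.to_nat k) <> 0
  end.

Definition qpoch_inf (a q : C) : C :=
  lim (T := C_CompleteNormedModule) (filtermap (fun n => qprod_pos a q n) eventually).

Definition Czpow (z : C) (k : Z) : C :=
  match k with
  | Zneg p => / Cpow z (Pos.to_nat p)
  | _ => Cpow z (Z.to_nat k)
  end.

Definition is_bilateral_series (f : Z -> C) (L : C) : Prop :=
  exists L1 L2 : C,
    is_series (fun n : nat => f (Z.of_nat n)) L1 /\
    is_series (fun n : nat => f (- Z.of_nat (S n))%Z) L2 /\
    L = L1 + L2.

From Stdlib Require Import Reals ZArith Lia Lra.
From Coquelicot Require Import Coquelicot.
Open Scope C_scope.

(* By symmetry in a, b, c we may take a = q^(N+1).  Then (q/a)_k vanishes for k > N and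
   1/(a)_k for k < -N, so both series terminate, and (x)_oo = (x)_N (x q^N)_oo turns the
   infinite products into finite ones.  Pairing the terms k and -k of the bilateral sum
   gives a terminating very-well-poised series (relative to 1 for the first identity, to q
   for the second).  Its terms are the alpha's of the Bailey pair obtained from the unit
   Bailey pair by two applications of Bailey's lemma, and the corresponding beta is the
   balanced series on the right-hand side (a terminating Watson transformation).  Bailey's
   lemma rests on the q-Pfaff-Saalschuetz sum. *)

Fixpoint csum (f : nat -> C) (n : nat) : C :=
  match n with O => 0 | S n => csum f n + f n end.

Lemma csum_S f n : csum f (S n) = csum f n + f n.
Proof. reflexivity. Qed.

Lemma csum_ext f g n : (forall i, (i < n)%nat -> f i = g i) -> csum f n = csum g n.
Proof.
  induction n as [|n IH]; intros H; simpl; [reflexivity|].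
  rewrite IH by (intros; apply H; lia). rewrite H by lia. reflexivity.
Qed.

Lemma csum_minus f g n : csum (fun i => f i - g i) n = csum f n - csum g n.
Proof. induction n as [|n IH]; simpl; [ring | rewrite IH; ring]. Qed.

Lemma csum_plus f g n : csum (fun i => f i + g i) n = csum f n + csum g n.
Proof. induction n as [|n IH]; simpl; [ring | rewrite IH; ring]. Qed.

Lemma csum_scal c f n : csum (fun i => c * f i) n = c * csum f n.
Proof. induction n as [|n IH]; simpl; [ring | rewrite IH; ring]. Qed.

Lemma csum_delta0 (f : nat -> C) n :
  csum (fun j => f j * match j with O => 1 | S _ => 0 end) (S n) = f O.
Proof. induction n as [|n IH]; [simpl; ring | rewrite csum_S, IH; ring]. Qed.

Lemma csum_exchange_triangle (f : nat -> nat -> C) n :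
  csum (fun j => csum (fun r => f j r) (S j)) (S n) =
  csum (fun r => csum (fun i => f (r + i)%nat r) (S (n - r))) (S n).
Proof.
  induction n as [|n IH]; [reflexivity|].
  rewrite csum_S, IH, (csum_S (fun r => csum (fun i => f (r + i)%nat r) (S (S n - r)))).
  rewrite (csum_ext (fun r => csum (fun i => f (r + i)%nat r) (S (S n - r)))
             (fun r => csum (fun i => f (r + i)%nat r) (S (n - r)) + f (S n) r)).
  - rewrite csum_plus, Nat.sub_diag, (csum_S (f (S n))).
    replace (csum (fun i => f (S n + i)%nat (S n)) 1) with (f (S n) (S n))
      by (simpl; rewrite Nat.add_0_r; ring).
    ring.
  - intros i Hi. replace (S n - i)%nat with (S (n - i)) by lia.
    rewrite csum_S. replace (i + S (n - i))%nat with (S n) by lia. reflexivity.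
Qed.

Lemma Cmult_neq_0_inv a b : a * b <> 0 -> a <> 0 /\ b <> 0.
Proof. intros H; split; intro E; apply H; rewrite E; ring. Qed.

Lemma Cdiv_neq_0 (x y : C) : x <> 0 -> y <> 0 -> x / y <> 0.
Proof. intros Hx Hy E. apply Hx. replace x with ((x / y) * y) by (field; auto). rewrite E. ring. Qed.

Lemma Cpow_div (x y : C) n : y <> 0 -> Cpow (x / y) n = Cpow x n / Cpow y n.
Proof. intros H. unfold Cdiv. rewrite Cpow_mult_l, Cpow_inv; auto. Qed.

Section QProducts.
Variable q : C.
Local Notation P x k := (qprod_pos x q k).
Local Notation Q k := (qprod_pos q q k).

Lemma qprod_pos_S x k : P x (S k) = P x k * (1 - x * Cpow q k).
Proof. reflexivity. Qed.

Lemma qprod_pos_add x m k : P x (m + k) = P x m * P (x * Cpow q m) k.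
Proof.
  induction k as [|k IH]; simpl; [rewrite Nat.add_0_r; ring|].
  rewrite Nat.add_succ_r. simpl. rewrite IH, Cpow_add_r. ring.
Qed.

Lemma qprod_pos_S_l z k : P z (S k) = (1 - z) * P (z * q) k.
Proof. revert z; induction k as [|k IH]; intros z; [simpl; ring|]. rewrite qprod_pos_S, IH. simpl. ring. Qed.

Lemma qprod_pos_neq0 z n : (forall k, 1 - z * Cpow q k <> 0) -> P z n <> 0.
Proof.
  intros H; induction n as [|n IH]; simpl; [intro E; injection E; lra|].
  apply Cmult_neq_0; auto.
Qed.

Lemma qprod_pos_neq0_le z n m : (m <= n)%nat -> P z n <> 0 -> P z m <> 0.
Proof.
  intros Hle H. replace n with (m + (n - m))%nat in H by lia.
  rewrite qprod_pos_add in H. apply Cmult_neq_0_inv in H. tauto.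
Qed.

Lemma qprod_pos_factor_neq0 z n k : (k < n)%nat -> P z n <> 0 -> 1 - z * Cpow q k <> 0.
Proof.
  intros Hk H. apply (qprod_pos_neq0_le z n (S k)) in H; [|lia].
  rewrite qprod_pos_S in H. apply Cmult_neq_0_inv in H. tauto.
Qed.

Lemma qprod_pos_eq0 x k i : (i < k)%nat -> x * Cpow q i = 1 -> P x k = 0.
Proof.
  intros Hi Hx. replace k with (S i + (k - S i))%nat by lia.
  rewrite qprod_pos_add, qprod_pos_S, Hx. ring.
Qed.

Hypothesis Hqfact : forall k, Q k <> 0.

Lemma qfact_factor_neq0 k : 1 - q * Cpow q k <> 0.
Proof. apply (qprod_pos_factor_neq0 q (S k)); auto. Qed.

(* Saalschütz's summation, proved by the recurrence in [m] of the sums; the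
   recurrence follows by telescoping in [i] with the certificate [saal_cert]. *)
Definition saal_term x y l i j :=
  P x i * P y i * P l j * Cpow l i / (Q i * Q j * P (l * x * y) i).

Definition saal_den x y l m := (1 - q * Cpow q m) * (1 - l * x * y * Cpow q m).

Definition saal_ratio x y l m :=
  (1 - l * y * Cpow q m) * (1 - l * x * Cpow q m) / saal_den x y l m.

Definition saal_cert x y l k j : C :=
  match k with
  | O => 0
  | S k' => - Cpow q j * (1 - Cpow q k) * (1 - l * x * y * Cpow q k')
              / saal_den x y l (k' + j) * saal_term x y l k j
  end.

Section Saalschutz.
Variables x y l : C.
Hypothesis Hlxy : forall k, 1 - l * x * y * Cpow q k <> 0.

Lemma saal_cert_telescopes k j :
  saal_cert x y l (S k) j - saal_cert x y l k (S j)
  = saal_term x y l k (S j) - saal_ratio x y l (k + j) * saal_term x y l k j.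
Proof.
  assert (HP : forall n, P (l * x * y) n <> 0) by (intros; apply qprod_pos_neq0; auto).
  unfold saal_cert, saal_ratio, saal_den, saal_term. destruct k as [|k].
  - simpl. pose proof (Hlxy 0) as H0. pose proof (qfact_factor_neq0 0) as H1.
    simpl in H0, H1. rewrite Cmult_1_r in H0, H1.
    field. repeat split; auto using qfact_factor_neq0.
  - replace (k + S j)%nat with (S k + j)%nat by lia.
    simpl P. rewrite !Cpow_add_r. simpl Cpow.
    pose proof (Hlxy k). pose proof (Hlxy (S k)).
    pose proof (qfact_factor_neq0 k). pose proof (qfact_factor_neq0 (S k)).
    pose proof (qfact_factor_neq0 j).
    pose proof (Hlxy (S k + j)%nat) as H5. pose proof (qfact_factor_neq0 (S k + j)%nat) as H6.
    rewrite Cpow_add_r in H5, H6. simpl Cpow in *.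
    field. repeat split; auto.
Qed.

Lemma saal_recurrence_partial m k : (k <= S m)%nat ->
  csum (fun i => saal_term x y l i (S m - i) - saal_ratio x y l m * saal_term x y l i (m - i)) k
  = saal_cert x y l k (S m - k).
Proof.
  induction k as [|k IH]; intros Hk; [reflexivity|].
  rewrite csum_S, IH by lia.
  set (j := (m - k)%nat).
  replace (S m - k)%nat with (S j) by (unfold j; lia).
  replace (S m - S k)%nat with j by (unfold j; lia).
  replace (saal_ratio x y l m) with (saal_ratio x y l (k + j)) by (f_equal; unfold j; lia).
  rewrite <- saal_cert_telescopes. ring.
Qed.

Lemma q_saalschutz m :
  csum (fun i => saal_term x y l i (m - i)) (S m)
  = P (l * x) m * P (l * y) m / (Q m * P (l * x * y) m).
Proof.
  assert (HP : forall n, P (l * x * y) n <> 0) by (intros; apply qprod_pos_neq0; auto).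
  induction m as [|m IH]; [unfold saal_term; simpl; field; auto|].
  assert (Hrec : csum (fun i => saal_term x y l i (S m - i)) (S (S m))
                 = saal_ratio x y l m * csum (fun i => saal_term x y l i (m - i)) (S m)
                   + saal_cert x y l (S m) 0 + saal_term x y l (S m) 0).
  { pose proof (saal_recurrence_partial m (S m) (le_n _)) as H.
    rewrite csum_minus, csum_scal, Nat.sub_diag in H.
    rewrite csum_S, Nat.sub_diag, <- H. ring. }
  rewrite Hrec, IH. unfold saal_cert, saal_ratio, saal_den, saal_term.
  rewrite Nat.add_0_r. simpl P. simpl Cpow.
  pose proof (Hlxy m). pose proof (qfact_factor_neq0 m).
  field. repeat split; auto.
Qed.
End Saalschutz.

(* [(-1)^r q^(r(r-1)/2)] *)
Fixpoint qsign r : C := match r with O => 1 | S r' => - Cpow q r' * qsign r' end.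

(* [(t/q)_r (1 - t q^(2r-1)) / ((q)_r (1 - t/q))], with [1 - t/q] cancelled so that it
   makes sense at [t = q]. *)
Definition vwp_factor t r : C :=
  match r with
  | O => 1
  | S r' => P t r' * (1 - t * Cpow q (2 * r' + 1)) / Q (S r')
  end.

Definition unit_alpha t r := vwp_factor t r * qsign r.

(* Bailey pairs are taken relative to [a = t / q]. *)
Definition beta_of_alpha t (al : nat -> C) n :=
  csum (fun r => al r / (Q (n - r) * P t (n + r))) (S n).

Section UnitBaileyPair.
Variable t : C.
Hypothesis Ht : forall k, 1 - t * Cpow q k <> 0.

Definition unit_pair_cert r' j :=
  - qsign (S r') * P t r'
  / ((1 - Cpow q (S r' + j)) * Q r' * Q j * P t (S r' + r' + j)).

Lemma unit_pair_cert_step r' j :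
  unit_pair_cert r' (S j) + unit_alpha t (S r') / (Q (S j) * P t (S (S r') + j + S r'))
  = unit_pair_cert (S r') j.
Proof.
  assert (HP : forall n, P t n <> 0) by (intros; apply qprod_pos_neq0; auto).
  unfold unit_pair_cert, unit_alpha, vwp_factor.
  replace (S (S r') + j + S r')%nat with (S (S r' + r' + S j)) by lia.
  replace (S (S r') + S r' + j)%nat with (S (S r' + r' + S j)) by lia.
  replace (S r' + S j)%nat with (S (S (r' + j))) by lia.
  replace (S (S r') + j)%nat with (S (S (r' + j))) by lia.
  replace (2 * r' + 1)%nat with (S (r' + r')) by lia.
  pose proof (Ht (S r' + r' + S j)%nat) as H1.
  pose proof (qfact_factor_neq0 r') as H2. pose proof (qfact_factor_neq0 j) as H3.
  pose proof (qfact_factor_neq0 (S (r' + j))) as H4.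
  replace (S r' + r' + S j)%nat with (S (S (r' + r' + j))) in * by lia.
  pose proof (Ht (S (r' + r' + j))) as H5. pose proof (Ht (r' + r' + j)) as H6.
  pose proof (HP (r' + r' + j)%nat) as H7.
  simpl P. simpl qsign. simpl Cpow in *. rewrite !Cpow_add_r in *.
  field. repeat split; auto.
Qed.

Lemma unit_pair_partial n' r : (1 <= r <= S n')%nat ->
  csum (fun i => unit_alpha t i / (Q (S n' - i) * P t (S n' + i))) r
  = unit_pair_cert (r - 1) (S n' - r).
Proof.
  assert (HP : forall n, P t n <> 0) by (intros; apply qprod_pos_neq0; auto).
  induction r as [|r IH]; intros Hr; [lia|].
  destruct r as [|r'].
  - unfold unit_pair_cert, unit_alpha, vwp_factor.
    replace (S n' - 1)%nat with n' by lia. simpl. rewrite !Nat.add_0_r.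
    pose proof (qfact_factor_neq0 n'). pose proof (HP (S n')). simpl P in H0.
    field. repeat split; auto.
  - rewrite csum_S, IH by lia.
    set (j := (S n' - S (S r'))%nat).
    replace (S n' - S r')%nat with (S j) by (unfold j; lia).
    replace (S (S r') - 1)%nat with (S r') by lia.
    replace (S r' - 1)%nat with r' by lia.
    rewrite <- unit_pair_cert_step.
    replace (S n' + S r')%nat with (S (S r') + j + S r')%nat by (unfold j; lia).
    reflexivity.
Qed.

Lemma unit_bailey_pair n :
  beta_of_alpha t (unit_alpha t) n = match n with O => 1 | S _ => 0 end.
Proof.
  assert (HP : forall n, P t n <> 0) by (intros; apply qprod_pos_neq0; auto).
  unfold beta_of_alpha. destruct n as [|n'].
  - unfold unit_alpha, vwp_factor. simpl. field. auto.
  - rewrite csum_S, unit_pair_partial by lia.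
    replace (S n' - 1)%nat with n' by lia.
    unfold unit_pair_cert, unit_alpha, vwp_factor. rewrite !Nat.sub_diag, Nat.add_0_r.
    replace (S n' + S n')%nat with (S (S n' + n')) by lia.
    replace (2 * n' + 1)%nat with (S n' + n')%nat by lia.
    pose proof (qfact_factor_neq0 n'). pose proof (Ht (S n' + n')%nat).
    pose proof (HP (S n' + n')%nat). pose proof (Ht (n' + n')%nat).
    pose proof (HP (n' + n')%nat). pose proof (Ht (S (n' + n'))).
    simpl P. simpl qsign. simpl Cpow in *. rewrite !Nat.add_0_r in *.
    field. repeat split; auto.
Qed.
End UnitBaileyPair.

(* Bailey's lemma with [t = aq], [l = aq/(r1 r2)], [m1 = aq/r1], [m2 = aq/r2]. *)
Section BaileyLemma.
Variables t r1 r2 m1 m2 l : C.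
Hypothesis Ht : forall k, 1 - t * Cpow q k <> 0.
Hypothesis Hm1 : l * r2 = m1.
Hypothesis Hm2 : l * r1 = m2.
Hypothesis Htl : l * r1 * r2 = t.

Definition bailey_beta_weight n j :=
  P r1 j * P r2 j * P l (n - j) * Cpow l j / (Q (n - j) * P m1 n * P m2 n).

Definition bailey_alpha_weight r :=
  P r1 r * P r2 r * Cpow l r / (P m1 r * P m2 r).

Lemma bailey_weight_sum n r : (r <= n)%nat -> P m1 n <> 0 -> P m2 n <> 0 ->
  csum (fun i => bailey_beta_weight n (r + i) / (Q i * P t (r + i + r))) (S (n - r))
  = bailey_alpha_weight r / (Q (n - r) * P t (n + r)).
Proof.
  intros Hr Hn1 Hn2.
  assert (HP : forall n, P t n <> 0) by (intros; apply qprod_pos_neq0; auto).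
  set (m := (n - r)%nat). replace n with (r + m)%nat in * by (unfold m; lia).
  clearbody m. clear Hr.
  assert (E : l * (r1 * Cpow q r) * (r2 * Cpow q r) = t * Cpow q (r + r))
    by (rewrite Cpow_add_r, <- Htl; ring).
  assert (Hg : forall k, 1 - l * (r1 * Cpow q r) * (r2 * Cpow q r) * Cpow q k <> 0).
  { intros k. rewrite E, <- Cmult_assoc, <- Cpow_add_r. apply Ht. }
  assert (HP2 : forall n, P (t * Cpow q (r + r)) n <> 0).
  { intros; apply qprod_pos_neq0; intros k; rewrite <- Cmult_assoc, <- Cpow_add_r. apply Ht. }
  set (K := P r1 r * P r2 r * Cpow l r / (P m1 (r + m) * P m2 (r + m) * P t (r + r))).
  rewrite (csum_ext _ (fun i => K * saal_term (r1 * Cpow q r) (r2 * Cpow q r) l i (m - i))).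
  - rewrite csum_scal, q_saalschutz by auto. unfold K, bailey_alpha_weight.
    rewrite E. rewrite (qprod_pos_add m1), (qprod_pos_add m2) in *.
    replace (r + m + r)%nat with ((r + r) + m)%nat by lia.
    rewrite (qprod_pos_add t (r + r) m).
    replace (m1 * Cpow q r) with (l * (r2 * Cpow q r)) in * by (rewrite <- Hm1; ring).
    replace (m2 * Cpow q r) with (l * (r1 * Cpow q r)) in * by (rewrite <- Hm2; ring).
    apply Cmult_neq_0_inv in Hn1. apply Cmult_neq_0_inv in Hn2.
    field. destruct Hn1, Hn2. repeat split; auto.
  - intros i Hi. unfold bailey_beta_weight, K, saal_term. rewrite E.
    replace (r + m - (r + i))%nat with (m - i)%nat by lia.
    replace (r + i + r)%nat with ((r + r) + i)%nat by lia.
    rewrite (qprod_pos_add r1 r i), (qprod_pos_add r2 r i), (qprod_pos_add t (r + r) i),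
      (Cpow_add_r l r i).
    field. repeat split; auto.
Qed.

Lemma bailey_lemma (al : nat -> C) n : P m1 n <> 0 -> P m2 n <> 0 ->
  csum (fun j => bailey_beta_weight n j * beta_of_alpha t al j) (S n)
  = beta_of_alpha t (fun r => bailey_alpha_weight r * al r) n.
Proof.
  intros Hn1 Hn2.
  assert (HP : forall n, P t n <> 0) by (intros; apply qprod_pos_neq0; auto).
  unfold beta_of_alpha.
  transitivity (csum (fun j => csum (fun r => bailey_beta_weight n j
                  * (al r / (Q (j - r) * P t (j + r)))) (S j)) (S n)).
  { apply csum_ext; intros; rewrite csum_scal; reflexivity. }
  rewrite csum_exchange_triangle.
  apply csum_ext; intros r Hr.
  transitivity (al r * csum (fun i => bailey_beta_weight n (r + i) / (Q i * P t (r + i + r)))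
                          (S (n - r))).
  { rewrite <- csum_scal. apply csum_ext. intros i Hi.
    replace (r + i - r)%nat with i by lia. field. split; auto. }
  rewrite bailey_weight_sum by (auto; lia). field. split; auto.
Qed.
End BaileyLemma.

(* A terminating form of Watson's transformation of a very-well-poised 8phi7. *)
Section Watson.
Variables t r1 r2 r3 r4 l12 l34 m1 m2 m3 m4 : C.
Hypothesis Ht : forall k, 1 - t * Cpow q k <> 0.
Hypotheses (Hm1 : l12 * r2 = m1) (Hm2 : l12 * r1 = m2) (Ht12 : l12 * r1 * r2 = t).
Hypotheses (Hm3 : l34 * r4 = m3) (Hm4 : l34 * r3 = m4) (Ht34 : l34 * r3 * r4 = t).

Lemma bailey_pair_of_unit j : P m3 j <> 0 -> P m4 j <> 0 ->
  P l34 j / (Q j * P m3 j * P m4 j)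
  = beta_of_alpha t (fun r => bailey_alpha_weight r3 r4 m3 m4 l34 r * unit_alpha t r) j.
Proof.
  intros H1 H2.
  rewrite <- (bailey_lemma t r3 r4 m3 m4 l34 Ht Hm3 Hm4 Ht34 (unit_alpha t) j H1 H2).
  rewrite (csum_ext _ (fun j' => bailey_beta_weight r3 r4 m3 m4 l34 j j'
                                  * match j' with O => 1 | S _ => 0 end)).
  - rewrite csum_delta0. unfold bailey_beta_weight. rewrite Nat.sub_0_r. simpl.
    field. repeat split; auto.
  - intros i Hi. rewrite unit_bailey_pair by exact Ht. reflexivity.
Qed.

Lemma watson_terminating N : P m1 N <> 0 -> P m2 N <> 0 -> P m3 N <> 0 -> P m4 N <> 0 ->
  csum (fun j => bailey_beta_weight r1 r2 m1 m2 l12 N j * (P l34 j / (Q j * P m3 j * P m4 j))) (S N)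
  = beta_of_alpha t (fun r => bailey_alpha_weight r1 r2 m1 m2 l12 r
                       * (bailey_alpha_weight r3 r4 m3 m4 l34 r * unit_alpha t r)) N.
Proof.
  intros H1 H2 H3 H4.
  rewrite <- (bailey_lemma t r1 r2 m1 m2 l12 Ht Hm1 Hm2 Ht12 _ N H1 H2).
  apply csum_ext. intros j Hj. f_equal.
  apply bailey_pair_of_unit; apply (qprod_pos_neq0_le _ N); auto; lia.
Qed.
End Watson.

Lemma vwp_factor_q r : vwp_factor q r = match r with O => 1 | S _ => 1 + Cpow q r end.
Proof.
  destruct r as [|r]; simpl; auto.
  replace (r + (r + 0) + 1)%nat with (S (r + r)) by lia.
  pose proof (qfact_factor_neq0 r). pose proof (Hqfact r).
  simpl Cpow. rewrite Cpow_add_r. field. split; auto.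
Qed.

Lemma vwp_factor_qq r : (1 - q) * vwp_factor (q * q) r = 1 - q * Cpow q (2 * r).
Proof.
  destruct r as [|r]; [simpl; ring|].
  unfold vwp_factor. rewrite qprod_pos_S_l.
  replace (2 * S r)%nat with (S (S (2 * r))) by lia.
  replace (2 * r + 1)%nat with (S (2 * r)) by lia.
  assert (1 - q <> 0) by (pose proof (qfact_factor_neq0 0) as H; simpl in H; rewrite Cmult_1_r in H; auto).
  pose proof (Hqfact (S r)) as H0. rewrite qprod_pos_S_l in H0. apply Cmult_neq_0_inv in H0.
  simpl Cpow. field. tauto.
Qed.

Lemma csum_fold_vwp (f : nat -> C) N :
  csum f (S N) + csum (fun m => Cpow q (S m) * f (S m)) N
  = csum (fun r => vwp_factor q r * f r) (S N).
Proof.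
  induction N as [|N IH]; [cbn [csum]; rewrite (vwp_factor_q 0); ring|].
  rewrite (csum_S f (S N)), (csum_S (fun m => Cpow q (S m) * f (S m)) N),
    (csum_S (fun r => vwp_factor q r * f r) (S N)), <- IH, (vwp_factor_q (S N)).
  ring.
Qed.

Hypothesis Hq0 : q <> 0.

Lemma qprod_pos_qpow_S_neq0 m k : P (Cpow q (S m)) k <> 0.
Proof.
  pose proof (Hqfact (m + k)) as H. rewrite qprod_pos_add in H.
  apply Cmult_neq_0_inv in H. rewrite Cpow_S. tauto.
Qed.

Lemma qprod_pos_inv_qpow_eq0 N k : (S N <= k)%nat -> P (q / Cpow q (S N)) k = 0.
Proof.
  intros Hk. apply (qprod_pos_eq0 _ k N); [lia|].
  rewrite Cpow_S. field. split; auto. apply Cpow_nz; auto.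
Qed.

Lemma qsign_neq0 r : qsign r <> 0.
Proof.
  induction r as [|r IH]; simpl; [intro E; injection E; lra|].
  apply Cmult_neq_0; auto.
  intro E. apply (Cpow_nz q r Hq0). replace (Cpow q r) with (- (- Cpow q r)) by ring.
  rewrite E. ring.
Qed.

Lemma qfact_reflect r s :
  Q (r + s) * qsign r = P (q / Cpow q (S (r + s))) r * Cpow (Cpow q (r + s)) r * Q s.
Proof.
  revert s; induction r as [|r IH]; intros s; [simpl; ring|].
  pose proof (IH (S s)) as IH'. replace (r + S s)%nat with (S (r + s)) in IH' by lia.
  replace (S r + s)%nat with (S (r + s)) by lia.
  simpl qsign. simpl P in *. simpl Cpow in *. rewrite Cpow_add_r in *.
  pose proof (Cpow_nz q r Hq0). pose proof (Cpow_nz q s Hq0).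
  transitivity (- Cpow q r * (Q (r + s) * (1 - q * (Cpow q r * Cpow q s)) * qsign r)); [ring|].
  rewrite IH'. field. repeat split; auto.
Qed.

Lemma qprod_pos_reverse (x : C) j s : x <> 0 ->
  P x s * Cpow x j * Q (j + s) * P (q / (x * Cpow q (j + s))) j
  = P x (j + s) * P (q / Cpow q (S (j + s))) j * Cpow q j * Q s.
Proof.
  intros Hx. revert s; induction j as [|j IH]; intros s; [simpl; ring|].
  pose proof (IH (S s)) as IH'. replace (j + S s)%nat with (S (j + s)) in IH' by lia.
  replace (S j + s)%nat with (S (j + s)) by lia.
  simpl P in *. simpl Cpow in *. rewrite Cpow_add_r in *.
  pose proof (Cpow_nz q j Hq0). pose proof (Cpow_nz q s Hq0).
  transitivity ((- / Cpow q s) * (P x s * (1 - x * Cpow q s) * Cpow x j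
      * (Q (j + s) * (1 - q * (Cpow q j * Cpow q s)))
      * P (q / (x * (q * (Cpow q j * Cpow q s)))) j)).
  { field. repeat split; auto. }
  rewrite IH'. field. repeat split; auto.
Qed.

Lemma qprod_pos_reflect (y : C) j : y <> 0 -> P y j = Cpow y j * qsign j * qprod_neg (q / y) q j.
Proof.
  intros Hy. induction j as [|j IH]; [simpl; ring|].
  rewrite qprod_pos_S, IH. simpl qprod_neg. simpl Cpow. simpl qsign.
  pose proof (Cpow_nz q j Hq0).
  field. repeat split; auto.
Qed.

Lemma qprod_neg_ratio (x : C) M : x <> 0 -> P x M <> 0 ->
  / qprod_neg (q / x) q M * qprod_neg x q M
  = Cpow x M * Cpow x M / Cpow q M * P (q / x) M / P x M.
Proof.
  intros Hx HP.
  assert (Hqx : q / x <> 0) by (apply Cdiv_neq_0; auto).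
  assert (E1 := qprod_pos_reflect x M Hx).
  assert (E2 := qprod_pos_reflect (q / x) M Hqx).
  replace (q / (q / x)) with x in E2 by (field; auto).
  pose proof (qsign_neq0 M). pose proof (Cpow_nz x M Hx). pose proof (Cpow_nz q M Hq0).
  assert (Hn : qprod_neg (q / x) q M <> 0) by (intro E; rewrite E in E1; apply HP; rewrite E1; ring).
  assert (Hn1 : qprod_neg (q / x) q M = P x M / (Cpow x M * qsign M)) by (rewrite E1; field; auto).
  assert (Hn2 : qprod_neg x q M = P (q / x) M / (Cpow (q / x) M * qsign M)).
  { rewrite E2, Cpow_div by auto. field. repeat split; auto. }
  rewrite Hn1, Hn2, Cpow_div by auto. field. repeat split; auto.
Qed.

Lemma qprod_neg_ratio_shift (x : C) m : x <> 0 -> 1 - x <> 0 -> P (x * q) m <> 0 ->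
  qprod_neg (x * q) q (S m) * / qprod_neg (q / x) q (S m)
  = - (Cpow x m * Cpow x m * x) * P (q / x) m / P (x * q) m.
Proof.
  intros Hx H1x HP.
  assert (Hix : / x <> 0).
  { replace (/ x) with (1 / x) by (field; auto). apply Cdiv_neq_0; auto. intro E; injection E; lra. }
  assert (E1 := qprod_pos_reflect x (S m) Hx).
  assert (E2 := qprod_pos_reflect (/ x) (S m) Hix).
  replace (q / / x) with (x * q) in E2 by (field; auto).
  rewrite qprod_pos_S_l in E1, E2. replace (/ x * q) with (q / x) in E2 by (field; auto).
  pose proof (qsign_neq0 (S m)). pose proof (Cpow_nz x m Hx). pose proof (Cpow_nz q m Hq0).
  assert (Hn1 : qprod_neg (q / x) q (S m) = (1 - x) * P (x * q) m / (Cpow x (S m) * qsign (S m))).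
  { rewrite E1. simpl Cpow. field. repeat split; auto. }
  assert (Hn2 : qprod_neg (x * q) q (S m)
                = (1 - / x) * P (q / x) m / (Cpow (/ x) (S m) * qsign (S m))).
  { rewrite E2, Cpow_inv by auto. simpl Cpow. field. repeat split; auto. }
  rewrite Hn1, Hn2, Cpow_inv by auto. simpl Cpow. field. repeat split; auto.
Qed.
End QProducts.

Lemma qpoch_of_nat x q k : qpoch x q (Z.of_nat k) = qprod_pos x q k.
Proof. destruct k; simpl; auto. rewrite SuccNat2Pos.id_succ. reflexivity. Qed.

Lemma qpoch_rec_of_nat x q k : qpoch_rec x q (Z.of_nat k) = / qprod_pos x q k.
Proof. destruct k; simpl; auto. rewrite SuccNat2Pos.id_succ. reflexivity. Qed.

Lemma Czpow_of_nat z k : Czpow z (Z.of_nat k) = Cpow z k.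
Proof. destruct k; simpl; auto. rewrite SuccNat2Pos.id_succ. reflexivity. Qed.

Lemma qpoch_neg_S x q m : qpoch x q (- Z.of_nat (S m)) = / qprod_neg x q (S m).
Proof. simpl. rewrite SuccNat2Pos.id_succ. reflexivity. Qed.

Lemma qpoch_rec_neg_S x q m : qpoch_rec x q (- Z.of_nat (S m)) = qprod_neg x q (S m).
Proof. simpl. rewrite SuccNat2Pos.id_succ. reflexivity. Qed.

Lemma Czpow_neg_S z m : Czpow z (- Z.of_nat (S m)) = / Cpow z (S m).
Proof. simpl. rewrite SuccNat2Pos.id_succ. reflexivity. Qed.

Lemma Rle_exp_compat (x y : R) : (x <= y)%R -> (exp x <= exp y)%R.
Proof.
  intros H. destruct (Rle_lt_or_eq_dec x y H) as [Hlt | ->]; [|lra].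
  left; apply exp_increasing; auto.
Qed.

Lemma qfact_neq0 q : (Cmod q < 1)%R -> forall k, qprod_pos q q k <> 0.
Proof.
  intros Hq k. apply qprod_pos_neq0. intros j E.
  assert (E1 : q * Cpow q j = 1)
    by (replace (q * Cpow q j) with (1 - (1 - q * Cpow q j)) by ring; rewrite E; ring).
  assert (Hlt : (Cmod (Cpow q (S j)) < 1)%R).
  { rewrite Cmod_pow. apply pow_lt_1_compat; [split; [apply Cmod_ge_0 | exact Hq] | lia]. }
  rewrite Cpow_S, E1, Cmod_1 in Hlt. lra.
Qed.

Section InfiniteProducts.
Variable q : C.
Hypothesis Hq : (Cmod q < 1)%R.
Local Notation P x k := (qprod_pos x q k).

Lemma qprod_pos_Cmod_le_exp x k :
  (Cmod (P x k) <= exp (Cmod x * (1 - Cmod q ^ k) / (1 - Cmod q)))%R.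
Proof.
  set (r := Cmod q) in *. assert (Hr : (0 <= r)%R) by apply Cmod_ge_0.
  induction k as [|k IH].
  - cbn [qprod_pos pow]. rewrite Cmod_1.
    replace (Cmod x * (1 - 1) / (1 - r))%R with 0%R by (field; lra). rewrite exp_0. lra.
  - rewrite qprod_pos_S, Cmod_mult.
    replace (Cmod x * (1 - r ^ S k) / (1 - r))%R
      with (Cmod x * (1 - r ^ k) / (1 - r) + Cmod x * r ^ k)%R by (cbn [pow]; field; lra).
    rewrite exp_plus. apply Rmult_le_compat; try apply Cmod_ge_0; auto.
    eapply Rle_trans; [|apply exp_ineq1_le].
    unfold Cminus. eapply Rle_trans; [apply Cmod_triangle|].
    rewrite Cmod_opp, Cmod_mult, Cmod_pow, Cmod_1. fold r. lra.
Qed.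

Lemma qprod_pos_Cmod_bound x k : (Cmod (P x k) <= exp (Cmod x / (1 - Cmod q)))%R.
Proof.
  eapply Rle_trans; [apply qprod_pos_Cmod_le_exp|]. apply Rle_exp_compat.
  assert (0 <= Cmod q ^ k)%R by (apply pow_le, Cmod_ge_0).
  assert (0 <= Cmod x)%R by apply Cmod_ge_0.
  unfold Rdiv. apply Rmult_le_compat_r; [left; apply Rinv_0_lt_compat; lra | nra].
Qed.

(* [P x n] is the [n]-th partial sum of the series [1 - sum_k x q^k P x k], whose terms
   are dominated by a geometric series. *)
Lemma qprod_pos_cvg x :
  filterlim (fun n => P x n) eventually (locally (T := C_CompleteNormedModule) (qpoch_inf x q)).
Proof.
  set (u := fun k => match k return C with O => 1 | S k => - (x * Cpow q k) * P x k end).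
  assert (Hpartial : forall n, sum_n u n = P x n).
  { induction n as [|n IH]; [rewrite sum_O; reflexivity|].
    rewrite sum_Sn, IH. change (P x n + - (x * Cpow q n) * P x n = P x (S n)).
    rewrite qprod_pos_S. ring. }
  assert (Hex : ex_series u).
  { apply ex_series_incr_1.
    apply (ex_series_le (V := C_CompleteNormedModule) (fun k => u (S k))
             (fun k => Cmod q ^ k * (Cmod x * exp (Cmod x / (1 - Cmod q))))%R).
    - intros k. change (Cmod (- (x * Cpow q k) * P x k)
                          <= Cmod q ^ k * (Cmod x * exp (Cmod x / (1 - Cmod q))))%R.
      rewrite Cmod_mult, Cmod_opp, Cmod_mult, Cmod_pow.
      pose proof (qprod_pos_Cmod_bound x k).
      assert (0 <= Cmod q ^ k)%R by (apply pow_le, Cmod_ge_0).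
      assert (0 <= Cmod x)%R by apply Cmod_ge_0.
      assert (0 <= Cmod x * Cmod q ^ k)%R by nra. nra.
    - apply ex_series_scal_r, ex_series_geom. rewrite Rabs_pos_eq by apply Cmod_ge_0. exact Hq. }
  destruct Hex as [L HL].
  assert (HP : filterlim (fun n => P x n) eventually (locally (T := C_CompleteNormedModule) L)).
  { eapply filterlim_ext; [exact Hpartial | exact HL]. }
  apply filterlim_locally. intros eps.
  apply (complete_cauchy (T := C_CompleteNormedModule) (filtermap (fun n => P x n) eventually)).
  - apply filtermap_proper_filter, eventually_filter.
  - intros eps'. exists L. exact (proj1 (filterlim_locally _ _) HP eps').
Qed.

Lemma qpoch_inf_shift x m : qpoch_inf x q = P x m * qpoch_inf (x * Cpow q m) q.
Proof.
  apply (filterlim_locally_unique (K := C_AbsRing) (V := C_CompleteNormedModule)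
           (F := eventually) (fun k => P x (m + k))).
  - apply filterlim_locally. intros eps.
    destruct (proj1 (filterlim_locally _ _) (qprod_pos_cvg x) eps) as [N HN].
    exists N. intros n Hn. apply HN. lia.
  - apply (filterlim_ext (fun k => P x m * P (x * Cpow q m) k)).
    { intros k. rewrite qprod_pos_add. reflexivity. }
    eapply filterlim_comp; [apply qprod_pos_cvg|].
    apply (filterlim_scal_r (K := C_AbsRing) (V := C_CompleteNormedModule) (P x m)).
Qed.
End InfiniteProducts.

Definition bilateral_identity (f : nat -> C) (g : Z -> C) (K : C) : Prop :=
  exists S, is_series f S /\ is_bilateral_series g (K * S).

Lemma bilateral_identity_ext (f f' : nat -> C) (g g' : Z -> C) (K K' : C) :
  (forall k, f k = f' k) -> (forall k, g k = g' k) -> K = K' ->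
  bilateral_identity f g K -> bilateral_identity f' g' K'.
Proof.
  intros Hf Hg <- [S [HS [L1 [L2 [H1 [H2 HL]]]]]].
  exists S. split; [eapply is_series_ext; [exact Hf | exact HS]|].
  exists L1, L2. split; [|split]; auto.
  - eapply is_series_ext; [intro n; apply Hg | exact H1].
  - eapply is_series_ext; [intro n; apply Hg | exact H2].
Qed.

Lemma sum_n_csum (f : nat -> C) n : sum_n f n = csum f (S n).
Proof. induction n as [|n IH]; [rewrite sum_O; simpl; ring | rewrite sum_Sn, IH; reflexivity]. Qed.

Lemma is_series_csum (f : nat -> C) M :
  (forall k, (M <= k)%nat -> f k = 0) -> is_series f (csum f M).
Proof.
  intros H.
  assert (Hstable : forall n, (M <= n)%nat -> csum f n = csum f M).
  { intros n Hn. induction n as [|n IH]; [replace M with 0%nat by lia; reflexivity|].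
    destruct (Nat.eq_dec M (S n)) as [->|E]; [reflexivity|].
    rewrite csum_S, IH, H by lia. ring. }
  apply (filterlim_ext_loc (fun _ => csum f M)); [|apply filterlim_const].
  exists M. intros n Hn. rewrite sum_n_csum, (Hstable (S n)) by lia. reflexivity.
Qed.

Lemma bilateral_identity_terminating (f : nat -> C) (g : Z -> C) (K : C) M1 M2 :
  (forall k, (M1 <= k)%nat -> f k = 0) ->
  (forall k, (M2 <= k)%nat -> g (Z.of_nat k) = 0) ->
  (forall k, (M2 <= k)%nat -> g (- Z.of_nat (S k))%Z = 0) ->
  csum (fun k => g (Z.of_nat k)) M2 + csum (fun m => g (- Z.of_nat (S m))%Z) M2
    = K * csum f M1 ->
  bilateral_identity f g K.
Proof.
  intros Hf Hpos Hneg Hsum. exists (csum f M1). split; [apply is_series_csum; exact Hf|].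
  exists (csum (fun k => g (Z.of_nat k)) M2), (csum (fun m => g (- Z.of_nat (S m))%Z) M2).
  split; [|split]; [apply is_series_csum; exact Hpos | apply is_series_csum; exact Hneg | auto].
Qed.

Definition first_bilateral_term q a b c d e (k : Z) : C :=
  qpoch (q / a) q k * qpoch (q / b) q k * qpoch (q / c) q k
    * qpoch (q / d) q k * qpoch (q / e) q k
  * (qpoch_rec a q k * qpoch_rec b q k * qpoch_rec c q k
       * qpoch_rec d q k * qpoch_rec e q k)
  * Czpow (a * b * c * d * e / (q * q * q)) k.

Definition first_series_term q a b c d e (k : nat) : C :=
  qprod_pos (q / a) q k * qprod_pos (q / b) q k * qprod_pos (q / c) q k
    * qprod_pos (d * e / q) q k
  / (qprod_pos q q k * qprod_pos (q * q * q / (a * b * c)) q k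
       * qprod_pos d q k * qprod_pos e q k)
  * Cpow q k.

Definition first_prefactor q a b c : C :=
  qpoch_inf q q * qpoch_inf (a * b / q) q * qpoch_inf (b * c / q) q * qpoch_inf (a * c / q) q
  / (qpoch_inf a q * qpoch_inf b q * qpoch_inf c q * qpoch_inf (a * b * c / (q * q)) q).

Section FirstTerminating.
Variables q a b c d e : C.
Variable N : nat.
Hypothesis Ha : a = Cpow q (S N).
Hypothesis Hq0 : q <> 0.
Hypothesis Hqfact : forall k, qprod_pos q q k <> 0.
Hypotheses (Hb : b <> 0) (Hc : c <> 0) (Hd : d <> 0) (He : e <> 0).
Hypotheses (HPb : forall k, qprod_pos b q k <> 0) (HPc : forall k, qprod_pos c q k <> 0)
  (HPd : forall k, qprod_pos d q k <> 0) (HPe : forall k, qprod_pos e q k <> 0).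
Hypothesis HPabc : forall k, qprod_pos (q * q * q / (a * b * c)) q k <> 0.
Local Notation P x k := (qprod_pos x q k).
Local Notation Q k := (qprod_pos q q k).

Definition first_term_nat (k : nat) :=
  P (q / a) k * P (q / b) k * P (q / c) k * P (q / d) k * P (q / e) k
  * (/ P a k * / P b k * / P c k * / P d k * / P e k)
  * Cpow (a * b * c * d * e / (q * q * q)) k.

Lemma first_qprod_a_neq0 k : P a k <> 0.
Proof. rewrite Ha. apply qprod_pos_qpow_S_neq0; auto. Qed.

Lemma first_bilateral_term_of_nat k : first_bilateral_term q a b c d e (Z.of_nat k) = first_term_nat k.
Proof.
  unfold first_bilateral_term, first_term_nat.
  rewrite !qpoch_of_nat, !qpoch_rec_of_nat, Czpow_of_nat. reflexivity.
Qed.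

Lemma first_bilateral_term_neg m :
  first_bilateral_term q a b c d e (- Z.of_nat (S m)) = Cpow q (S m) * first_term_nat (S m).
Proof.
  unfold first_bilateral_term, first_term_nat.
  rewrite !qpoch_neg_S, !qpoch_rec_neg_S, Czpow_neg_S.
  remember (S m) as M. assert (Han : a <> 0) by (rewrite Ha; apply Cpow_nz; auto).
  transitivity ((/ qprod_neg (q / a) q M * qprod_neg a q M)
    * (/ qprod_neg (q / b) q M * qprod_neg b q M) * (/ qprod_neg (q / c) q M * qprod_neg c q M)
    * (/ qprod_neg (q / d) q M * qprod_neg d q M) * (/ qprod_neg (q / e) q M * qprod_neg e q M)
    * / Cpow (a * b * c * d * e / (q * q * q)) M); [ring|].
  rewrite !qprod_neg_ratio; auto using first_qprod_a_neq0.
  rewrite Cpow_div by (repeat apply Cmult_neq_0; auto). rewrite !Cpow_mult_l.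
  pose proof (Cpow_nz a M Han). pose proof (Cpow_nz b M Hb). pose proof (Cpow_nz c M Hc).
  pose proof (Cpow_nz d M Hd). pose proof (Cpow_nz e M He). pose proof (Cpow_nz q M Hq0).
  pose proof (first_qprod_a_neq0 M).
  pose proof (HPb M). pose proof (HPc M). pose proof (HPd M). pose proof (HPe M).
  field. repeat split; auto.
Qed.

Lemma first_term_nat_eq0 k : (S N <= k)%nat -> first_term_nat k = 0.
Proof. intros Hk. unfold first_term_nat. rewrite Ha, qprod_pos_inv_qpow_eq0 by auto. ring. Qed.

Lemma first_series_term_eq0 k : (S N <= k)%nat -> first_series_term q a b c d e k = 0.
Proof.
  intros Hk. unfold first_series_term. rewrite Ha, qprod_pos_inv_qpow_eq0 by auto.
  unfold Cdiv. ring.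
Qed.

Lemma first_folded_term r : (r <= N)%nat ->
  vwp_factor q q r * first_term_nat r
  = Q N * Q N * (bailey_alpha_weight q (q / b) (q / c) b c (b * c / q) r
                 * (bailey_alpha_weight q (q / d) (q / e) d e (d * e / q) r * unit_alpha q q r)
                 / (Q (N - r) * P q (N + r))).
Proof.
  intros Hr.
  pose proof (first_qprod_a_neq0 r) as Har.
  assert (HN : N = (r + (N - r))%nat) by lia.
  set (s := (N - r)%nat) in *. clearbody s.
  pose proof (Hqfact (r + s)%nat). pose proof (Hqfact s).
  assert (Hsign : qsign q r = P (q / Cpow q (S (r + s))) r * Cpow (Cpow q (r + s)) r * Q s / Q (r + s)).
  { rewrite <- (qfact_reflect q Hq0 r s). field. auto. }
  unfold first_term_nat, bailey_alpha_weight, unit_alpha. rewrite Ha, HN in *. rewrite Hsign.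
  replace (Cpow q (S (r + s)) * b * c * d * e / (q * q * q))
    with (Cpow q (r + s) * (b * c / q) * (d * e / q)) by (simpl Cpow; field; auto).
  rewrite !Cpow_mult_l, (qprod_pos_add q q (r + s) r).
  simpl Cpow in *.
  pose proof (HPb r). pose proof (HPc r). pose proof (HPd r). pose proof (HPe r).
  pose proof (Cpow_nz q (r + s) Hq0).
  field. repeat split; auto.
Qed.

Lemma first_watson_term j : (j <= N)%nat ->
  Q N * Q N * (bailey_beta_weight q (q / b) (q / c) b c (b * c / q) N j
               * (P (d * e / q) j / (Q j * P d j * P e j)))
  = Q N * P (b * c / q) N / (P b N * P c N) * first_series_term q a b c d e j.
Proof.
  intros Hj.
  assert (HN : N = (j + (N - j))%nat) by lia.
  set (s := (N - j)%nat) in *. clearbody s.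
  assert (Hx : b * c / q <> 0) by (apply Cdiv_neq_0; auto; apply Cmult_neq_0; auto).
  pose proof (qprod_pos_reverse q Hq0 (b * c / q) j s Hx) as E.
  pose proof (HPabc j) as Habc. rewrite Ha, HN in Habc.
  replace (q / (b * c / q * Cpow q (j + s))) with (q * q * q / (Cpow q (S (j + s)) * b * c)) in E
    by (simpl Cpow; field; repeat split; auto; apply Cpow_nz; auto).
  pose proof (Hqfact (j + s)%nat). pose proof (Hqfact s). pose proof (Cpow_nz _ j Hx).
  assert (E' : P (b * c / q) s =
     P (b * c / q) (j + s) * P (q / Cpow q (S (j + s))) j * Cpow q j * Q s /
      (Q (j + s) * P (q * q * q / (Cpow q (S (j + s)) * b * c)) j * Cpow (b * c / q) j)).
  { rewrite <- E. field. repeat split; auto. }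
  unfold bailey_beta_weight, first_series_term. rewrite Ha, HN.
  replace (j + s - j)%nat with s by lia. rewrite E'.
  pose proof (HPb (j + s)%nat). pose proof (HPc (j + s)%nat).
  pose proof (HPd j). pose proof (HPe j). pose proof (Hqfact j).
  field. repeat split; auto.
Qed.

Lemma first_terminating_sum :
  csum (fun k => first_bilateral_term q a b c d e (Z.of_nat k)) (S N)
  + csum (fun m => first_bilateral_term q a b c d e (- Z.of_nat (S m))) (S N)
  = Q N * P (b * c / q) N / (P b N * P c N) * csum (first_series_term q a b c d e) (S N).
Proof.
  rewrite (csum_ext _ first_term_nat) by (intros; apply first_bilateral_term_of_nat).
  rewrite (csum_ext (fun m => first_bilateral_term q a b c d e (- Z.of_nat (S m)))
             (fun m => Cpow q (S m) * first_term_nat (S m)))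
    by (intros; apply first_bilateral_term_neg).
  rewrite (csum_S (fun m => Cpow q (S m) * first_term_nat (S m)) N),
    (first_term_nat_eq0 (S N)), Cmult_0_r, Cplus_0_r by lia.
  rewrite csum_fold_vwp by auto.
  rewrite (csum_ext _ (fun r => Q N * Q N * (bailey_alpha_weight q (q / b) (q / c) b c (b * c / q) r
       * (bailey_alpha_weight q (q / d) (q / e) d e (d * e / q) r * unit_alpha q q r)
       / (Q (N - r) * P q (N + r))))) by (intros; apply first_folded_term; lia).
  rewrite csum_scal.
  change (csum (fun r => _ / (Q (N - r) * P q (N + r))) (S N)) with
    (beta_of_alpha q q (fun r => bailey_alpha_weight q (q / b) (q / c) b c (b * c / q) r
       * (bailey_alpha_weight q (q / d) (q / e) d e (d * e / q) r * unit_alpha q q r)) N).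
  rewrite <- (watson_terminating q Hqfact q (q / b) (q / c) (q / d) (q / e) (b * c / q) (d * e / q)
                b c d e (qfact_factor_neq0 q Hqfact)) by (auto; field; auto).
  rewrite <- csum_scal, <- csum_scal. apply csum_ext. intros j Hj. apply first_watson_term. lia.
Qed.
End FirstTerminating.

Definition second_bilateral_term q a b c d e (k : Z) : C :=
  qpoch (q / a) q k * qpoch (q / b) q k * qpoch (q / c) q k
    * qpoch (q / d) q k * qpoch (q / e) q k
  * (qpoch_rec (a * q) q k * qpoch_rec (b * q) q k * qpoch_rec (c * q) q k
       * qpoch_rec (d * q) q k * qpoch_rec (e * q) q k)
  * Czpow (a * b * c * d * e / q) k.

Definition second_series_term q a b c d e (k : nat) : C :=
  qprod_pos (q / a) q k * qprod_pos (q / b) q k * qprod_pos (q / c) q k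
    * qprod_pos (d * e) q k
  / (qprod_pos q q k * qprod_pos (q * q / (a * b * c)) q k
       * qprod_pos (d * q) q k * qprod_pos (e * q) q k)
  * Cpow q k.

Definition second_prefactor q a b c : C :=
  qpoch_inf q q * qpoch_inf (a * b) q * qpoch_inf (b * c) q * qpoch_inf (a * c) q
  / (qpoch_inf (a * q) q * qpoch_inf (b * q) q * qpoch_inf (c * q) q
       * qpoch_inf (a * b * c / q) q).

Section SecondTerminating.
Variables q a b c d e : C.
Variable N : nat.
Hypothesis Ha : a = Cpow q (S N).
Hypothesis Hq0 : q <> 0.
Hypothesis Hqfact : forall k, qprod_pos q q k <> 0.
Hypotheses (Hb : b <> 0) (Hc : c <> 0) (Hd : d <> 0) (He : e <> 0).
Hypotheses (H1b : 1 - b <> 0) (H1c : 1 - c <> 0) (H1d : 1 - d <> 0) (H1e : 1 - e <> 0).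
Hypotheses (HPb : forall k, qprod_pos (b * q) q k <> 0) (HPc : forall k, qprod_pos (c * q) q k <> 0)
  (HPd : forall k, qprod_pos (d * q) q k <> 0) (HPe : forall k, qprod_pos (e * q) q k <> 0).
Hypothesis HPabc : forall k, qprod_pos (q * q / (a * b * c)) q k <> 0.
Local Notation P x k := (qprod_pos x q k).
Local Notation Q k := (qprod_pos q q k).

Definition second_term_nat (k : nat) :=
  P (q / a) k * P (q / b) k * P (q / c) k * P (q / d) k * P (q / e) k
  * (/ P (a * q) k * / P (b * q) k * / P (c * q) k * / P (d * q) k * / P (e * q) k)
  * Cpow (a * b * c * d * e / q) k.

Lemma second_1_sub_a_neq0 : 1 - a <> 0.
Proof.
  rewrite Ha, Cpow_S. apply (qprod_pos_factor_neq0 q q (S (S N)) N); auto.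
Qed.

Lemma second_qprod_aq_neq0 k : P (a * q) k <> 0.
Proof. rewrite Ha, Cmult_comm, <- Cpow_S. apply qprod_pos_qpow_S_neq0; auto. Qed.

Lemma second_qfact_factors_neq0 k : 1 - q <> 0 /\ P (q * q) k <> 0.
Proof. pose proof (Hqfact (S k)) as H. rewrite qprod_pos_S_l in H. exact (Cmult_neq_0_inv _ _ H). Qed.

Lemma second_bilateral_term_of_nat k :
  second_bilateral_term q a b c d e (Z.of_nat k) = second_term_nat k.
Proof.
  unfold second_bilateral_term, second_term_nat.
  rewrite !qpoch_of_nat, !qpoch_rec_of_nat, Czpow_of_nat. reflexivity.
Qed.

Lemma second_bilateral_term_neg m :
  second_bilateral_term q a b c d e (- Z.of_nat (S m))
  = - (q * Cpow q (2 * m)) * second_term_nat m.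
Proof.
  unfold second_bilateral_term, second_term_nat.
  rewrite !qpoch_neg_S, !qpoch_rec_neg_S, Czpow_neg_S.
  assert (Han : a <> 0) by (rewrite Ha; apply Cpow_nz; auto). pose proof second_1_sub_a_neq0.
  transitivity ((qprod_neg (a * q) q (S m) * / qprod_neg (q / a) q (S m))
    * (qprod_neg (b * q) q (S m) * / qprod_neg (q / b) q (S m))
    * (qprod_neg (c * q) q (S m) * / qprod_neg (q / c) q (S m))
    * (qprod_neg (d * q) q (S m) * / qprod_neg (q / d) q (S m))
    * (qprod_neg (e * q) q (S m) * / qprod_neg (q / e) q (S m))
    * / Cpow (a * b * c * d * e / q) (S m)); [ring|].
  rewrite !qprod_neg_ratio_shift; auto using second_qprod_aq_neq0.
  replace (2 * m)%nat with (m + m)%nat by lia.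
  rewrite Cpow_add_r, Cpow_S, Cpow_div, !Cpow_mult_l by auto.
  pose proof (Cpow_nz a m Han). pose proof (Cpow_nz b m Hb). pose proof (Cpow_nz c m Hc).
  pose proof (Cpow_nz d m Hd). pose proof (Cpow_nz e m He). pose proof (Cpow_nz q m Hq0).
  pose proof (second_qprod_aq_neq0 m).
  pose proof (HPb m). pose proof (HPc m). pose proof (HPd m). pose proof (HPe m).
  field. repeat split; auto.
Qed.

Lemma second_term_nat_eq0 k : (S N <= k)%nat -> second_term_nat k = 0.
Proof. intros Hk. unfold second_term_nat. rewrite Ha, qprod_pos_inv_qpow_eq0 by auto. ring. Qed.

Lemma second_series_term_eq0 k : (S N <= k)%nat -> second_series_term q a b c d e k = 0.
Proof.
  intros Hk. unfold second_series_term. rewrite Ha, qprod_pos_inv_qpow_eq0 by auto.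
  unfold Cdiv. ring.
Qed.

Lemma second_folded_term r : (r <= N)%nat ->
  vwp_factor q (q * q) r * second_term_nat r
  = Q N * P (q * q) N * (bailey_alpha_weight q (q / b) (q / c) (b * q) (c * q) (b * c) r
      * (bailey_alpha_weight q (q / d) (q / e) (d * q) (e * q) (d * e) r * unit_alpha q (q * q) r)
      / (Q (N - r) * P (q * q) (N + r))).
Proof.
  intros Hr.
  pose proof (second_qprod_aq_neq0 r) as Har.
  assert (HN : N = (r + (N - r))%nat) by lia.
  set (s := (N - r)%nat) in *. clearbody s.
  pose proof (Hqfact (r + s)%nat). pose proof (Hqfact s).
  destruct (second_qfact_factors_neq0 (r + s)) as [H1q HPqq].
  assert (Hsign : qsign q r = P (q / Cpow q (S (r + s))) r * Cpow (Cpow q (r + s)) r * Q s / Q (r + s)).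
  { rewrite <- (qfact_reflect q Hq0 r s). field. auto. }
  unfold second_term_nat, bailey_alpha_weight, unit_alpha. rewrite Ha, HN in *. rewrite Hsign.
  replace (Cpow q (S (r + s)) * b * c * d * e / q) with (Cpow q (r + s) * (b * c) * (d * e))
    by (simpl Cpow; field; auto).
  rewrite !Cpow_mult_l, (qprod_pos_add q (q * q) (r + s) r).
  replace (q * q * Cpow q (r + s)) with (Cpow q (S (r + s)) * q) by (simpl; ring).
  simpl Cpow in *.
  pose proof (HPb r). pose proof (HPc r). pose proof (HPd r). pose proof (HPe r).
  pose proof (Cpow_nz q (r + s) Hq0).
  field. repeat split; auto.
Qed.

Lemma second_watson_term j : (j <= N)%nat ->
  Q N * P (q * q) N * (bailey_beta_weight q (q / b) (q / c) (b * q) (c * q) (b * c) N j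
                       * (P (d * e) j / (Q j * P (d * q) j * P (e * q) j)))
  = P (q * q) N * P (b * c) N / (P (b * q) N * P (c * q) N) * second_series_term q a b c d e j.
Proof.
  intros Hj.
  assert (HN : N = (j + (N - j))%nat) by lia.
  set (s := (N - j)%nat) in *. clearbody s.
  assert (Hx : b * c <> 0) by (apply Cmult_neq_0; auto).
  pose proof (qprod_pos_reverse q Hq0 (b * c) j s Hx) as E.
  pose proof (HPabc j) as Habc. rewrite Ha, HN in Habc.
  replace (q / (b * c * Cpow q (j + s))) with (q * q / (Cpow q (S (j + s)) * b * c)) in E
    by (simpl Cpow; field; repeat split; auto; apply Cpow_nz; auto).
  pose proof (Hqfact (j + s)%nat). pose proof (Hqfact s). pose proof (Cpow_nz _ j Hx).
  assert (E' : P (b * c) s =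
     P (b * c) (j + s) * P (q / Cpow q (S (j + s))) j * Cpow q j * Q s /
      (Q (j + s) * P (q * q / (Cpow q (S (j + s)) * b * c)) j * Cpow (b * c) j)).
  { rewrite <- E. field. repeat split; auto. }
  destruct (second_qfact_factors_neq0 (j + s)) as [H1q HPqq].
  unfold bailey_beta_weight, second_series_term. rewrite Ha, HN.
  replace (j + s - j)%nat with s by lia. rewrite E'.
  pose proof (HPb (j + s)%nat). pose proof (HPc (j + s)%nat).
  pose proof (HPd j). pose proof (HPe j). pose proof (Hqfact j).
  field. repeat split; auto.
Qed.

Lemma second_terminating_sum :
  csum (fun k => second_bilateral_term q a b c d e (Z.of_nat k)) (S N)
  + csum (fun m => second_bilateral_term q a b c d e (- Z.of_nat (S m))) (S N)
  = Q (S N) * P (b * c) N / (P (b * q) N * P (c * q) N) * csum (second_series_term q a b c d e) (S N).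
Proof.
  rewrite (csum_ext _ second_term_nat) by (intros; apply second_bilateral_term_of_nat).
  rewrite (csum_ext (fun m => second_bilateral_term q a b c d e (- Z.of_nat (S m)))
             (fun m => - (q * Cpow q (2 * m)) * second_term_nat m))
    by (intros; apply second_bilateral_term_neg).
  rewrite <- csum_plus.
  rewrite (csum_ext _ (fun r => (1 - q) * (Q N * P (q * q) N
       * (bailey_alpha_weight q (q / b) (q / c) (b * q) (c * q) (b * c) r
          * (bailey_alpha_weight q (q / d) (q / e) (d * q) (e * q) (d * e) r * unit_alpha q (q * q) r)
          / (Q (N - r) * P (q * q) (N + r)))))).
  2:{ intros r Hr. rewrite <- second_folded_term by lia.
      rewrite (Cmult_assoc (1 - q)), vwp_factor_qq by auto. ring. }
  rewrite !csum_scal.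
  change (csum (fun r => _ / (Q (N - r) * P (q * q) (N + r))) (S N)) with
    (beta_of_alpha q (q * q) (fun r => bailey_alpha_weight q (q / b) (q / c) (b * q) (c * q) (b * c) r
       * (bailey_alpha_weight q (q / d) (q / e) (d * q) (e * q) (d * e) r
          * unit_alpha q (q * q) r)) N).
  assert (Ht : forall k, 1 - q * q * Cpow q k <> 0).
  { intros k. rewrite <- Cmult_assoc, <- Cpow_S. apply qfact_factor_neq0; auto. }
  rewrite <- (watson_terminating q Hqfact (q * q) (q / b) (q / c) (q / d) (q / e) (b * c) (d * e)
                (b * q) (c * q) (d * q) (e * q) Ht) by (auto; field; auto).
  rewrite <- !csum_scal, (qprod_pos_S_l q q N).
  apply csum_ext. intros j Hj. rewrite second_watson_term by lia. unfold Cdiv. ring.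
Qed.
End SecondTerminating.

Lemma first_prefactor_qpow (q a b c : C) N :
  q <> 0 -> (Cmod q < 1)%R -> a = Cpow q (S N) -> b <> 0 -> c <> 0 ->
  qpoch_inf a q * qpoch_inf b q * qpoch_inf c q * qpoch_inf (a * b * c / (q * q)) q <> 0 ->
  first_prefactor q a b c
  = qprod_pos q q N * qprod_pos (b * c / q) q N / (qprod_pos b q N * qprod_pos c q N).
Proof.
  intros Hq0 Hq Ha Hb Hc Hinf. unfold first_prefactor.
  rewrite (qpoch_inf_shift q Hq q N), (qpoch_inf_shift q Hq b N), (qpoch_inf_shift q Hq c N),
    (qpoch_inf_shift q Hq (b * c / q) N) in *.
  replace (q * Cpow q N) with a in * by (rewrite Ha; reflexivity).
  replace (a * b / q) with (b * Cpow q N) by (rewrite Ha; simpl; field; auto).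
  replace (a * c / q) with (c * Cpow q N) by (rewrite Ha; simpl; field; auto).
  replace (a * b * c / (q * q)) with (b * c / q * Cpow q N) in * by (rewrite Ha; simpl; field; auto).
  repeat match goal with H : ?x * ?y <> ?z |- _ => apply Cmult_neq_0_inv in H; destruct H end.
  field. repeat split; auto.
Qed.

Lemma second_prefactor_qpow (q a b c : C) N :
  q <> 0 -> (Cmod q < 1)%R -> a = Cpow q (S N) ->
  qpoch_inf (a * q) q * qpoch_inf (b * q) q * qpoch_inf (c * q) q * qpoch_inf (a * b * c / q) q <> 0 ->
  second_prefactor q a b c
  = qprod_pos q q (S N) * qprod_pos (b * c) q N / (qprod_pos (b * q) q N * qprod_pos (c * q) q N).
Proof.
  intros Hq0 Hq Ha Hinf. unfold second_prefactor.
  rewrite (qpoch_inf_shift q Hq q (S N)), (qpoch_inf_shift q Hq (b * q) N),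
    (qpoch_inf_shift q Hq (c * q) N), (qpoch_inf_shift q Hq (b * c) N) in *.
  replace (q * Cpow q (S N)) with (a * q) in * by (rewrite Ha; ring).
  replace (a * b * c / q) with (b * c * Cpow q N) in * by (rewrite Ha, Cpow_S; field; auto).
  replace (a * b) with (b * q * Cpow q N) by (rewrite Ha, Cpow_S; ring).
  replace (a * c) with (c * q * Cpow q N) by (rewrite Ha, Cpow_S; ring).
  repeat match goal with H : ?x * ?y <> ?z |- _ => apply Cmult_neq_0_inv in H; destruct H end.
  field. repeat split; auto.
Qed.

Lemma first_identity_qpow (q a b c d e : C) N :
  (0 < Cmod q < 1)%R -> a = Cpow q (S N) ->
  b <> 0 -> c <> 0 -> d <> 0 -> e <> 0 ->
  (forall k, qprod_pos b q k <> 0) -> (forall k, qprod_pos c q k <> 0) ->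
  (forall k, qprod_pos d q k <> 0) -> (forall k, qprod_pos e q k <> 0) ->
  (forall k, qprod_pos (q * q * q / (a * b * c)) q k <> 0) ->
  qpoch_inf a q * qpoch_inf b q * qpoch_inf c q * qpoch_inf (a * b * c / (q * q)) q <> 0 ->
  bilateral_identity (first_series_term q a b c d e) (first_bilateral_term q a b c d e)
    (first_prefactor q a b c).
Proof.
  intros [Hq0 Hq1] Ha Hb Hc Hd He HPb HPc HPd HPe HPabc Hinf.
  apply Cmod_gt_0 in Hq0. pose proof (qfact_neq0 q Hq1) as Hqfact.
  apply (bilateral_identity_terminating _ _ _ (S N) (S N)).
  - intros k Hk. apply (first_series_term_eq0 q a b c d e N); auto.
  - intros k Hk. rewrite first_bilateral_term_of_nat. apply (first_term_nat_eq0 q a b c d e N); auto.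
  - intros k Hk. rewrite (first_bilateral_term_neg q a b c d e N) by auto.
    rewrite (first_term_nat_eq0 q a b c d e N) by (auto; lia). ring.
  - rewrite (first_terminating_sum q a b c d e N), (first_prefactor_qpow q a b c N); auto.
Qed.

Lemma second_identity_qpow (q a b c d e : C) N :
  (0 < Cmod q < 1)%R -> a = Cpow q (S N) ->
  b <> 0 -> c <> 0 -> d <> 0 -> e <> 0 ->
  1 - b <> 0 -> 1 - c <> 0 -> 1 - d <> 0 -> 1 - e <> 0 ->
  (forall k, qprod_pos (b * q) q k <> 0) -> (forall k, qprod_pos (c * q) q k <> 0) ->
  (forall k, qprod_pos (d * q) q k <> 0) -> (forall k, qprod_pos (e * q) q k <> 0) ->
  (forall k, qprod_pos (q * q / (a * b * c)) q k <> 0) ->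
  qpoch_inf (a * q) q * qpoch_inf (b * q) q * qpoch_inf (c * q) q * qpoch_inf (a * b * c / q) q <> 0 ->
  bilateral_identity (second_series_term q a b c d e) (second_bilateral_term q a b c d e)
    (second_prefactor q a b c).
Proof.
  intros [Hq0 Hq1] Ha Hb Hc Hd He H1b H1c H1d H1e HPb HPc HPd HPe HPabc Hinf.
  apply Cmod_gt_0 in Hq0. pose proof (qfact_neq0 q Hq1) as Hqfact.
  apply (bilateral_identity_terminating _ _ _ (S N) (S N)).
  - intros k Hk. apply (second_series_term_eq0 q a b c d e N); auto.
  - intros k Hk. rewrite second_bilateral_term_of_nat. apply (second_term_nat_eq0 q a b c d e N); auto.
  - intros k Hk. rewrite (second_bilateral_term_neg q a b c d e N) by auto.
    rewrite (second_term_nat_eq0 q a b c d e N) by (auto; lia). ring.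
  - rewrite (second_terminating_sum q a b c d e N), (second_prefactor_qpow q a b c N); auto.
Qed.

Lemma first_identity_swap12 (q a b c d e : C) :
  bilateral_identity (first_series_term q b a c d e) (first_bilateral_term q b a c d e)
    (first_prefactor q b a c) ->
  bilateral_identity (first_series_term q a b c d e) (first_bilateral_term q a b c d e)
    (first_prefactor q a b c).
Proof.
  apply bilateral_identity_ext.
  - intro k. unfold first_series_term. rewrite (Cmult_comm b a). unfold Cdiv. ring.
  - intro k. unfold first_bilateral_term. rewrite (Cmult_comm b a). ring.
  - unfold first_prefactor. rewrite (Cmult_comm b a). unfold Cdiv. f_equal; [ring | f_equal; ring].
Qed.

Lemma first_identity_swap13 (q a b c d e : C) :
  bilateral_identity (first_series_term q c b a d e) (first_bilateral_term q c b a d e)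
    (first_prefactor q c b a) ->
  bilateral_identity (first_series_term q a b c d e) (first_bilateral_term q a b c d e)
    (first_prefactor q a b c).
Proof.
  apply bilateral_identity_ext.
  - intro k. unfold first_series_term. replace (c * b * a) with (a * b * c) by ring.
    unfold Cdiv. ring.
  - intro k. unfold first_bilateral_term.
    replace (c * b * a * d * e) with (a * b * c * d * e) by ring. ring.
  - unfold first_prefactor. replace (c * b * a) with (a * b * c) by ring.
    rewrite (Cmult_comm c b), (Cmult_comm b a), (Cmult_comm c a).
    unfold Cdiv. f_equal; [ring | f_equal; ring].
Qed.

Lemma second_identity_swap12 (q a b c d e : C) :
  bilateral_identity (second_series_term q b a c d e) (second_bilateral_term q b a c d e)
    (second_prefactor q b a c) ->
  bilateral_identity (second_series_term q a b c d e) (second_bilateral_term q a b c d e)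
    (second_prefactor q a b c).
Proof.
  apply bilateral_identity_ext.
  - intro k. unfold second_series_term. rewrite (Cmult_comm b a). unfold Cdiv. ring.
  - intro k. unfold second_bilateral_term. rewrite (Cmult_comm b a). ring.
  - unfold second_prefactor. rewrite (Cmult_comm b a). unfold Cdiv. f_equal; [ring | f_equal; ring].
Qed.

Lemma second_identity_swap13 (q a b c d e : C) :
  bilateral_identity (second_series_term q c b a d e) (second_bilateral_term q c b a d e)
    (second_prefactor q c b a) ->
  bilateral_identity (second_series_term q a b c d e) (second_bilateral_term q a b c d e)
    (second_prefactor q a b c).
Proof.
  apply bilateral_identity_ext.
  - intro k. unfold second_series_term. replace (c * b * a) with (a * b * c) by ring.
    unfold Cdiv. ring.
  - intro k. unfold second_bilateral_term.
    replace (c * b * a * d * e) with (a * b * c * d * e) by ring. ring.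
  - unfold second_prefactor. replace (c * b * a) with (a * b * c) by ring.
    rewrite (Cmult_comm c b), (Cmult_comm b a), (Cmult_comm c a).
    unfold Cdiv. f_equal; [ring | f_equal; ring].
Qed.

Lemma Cmult4_neq0_2 (w x y z : C) : w * x * y * z <> 0 -> x <> 0.
Proof.
  intros H. apply Cmult_neq_0_inv in H as [H _]. apply Cmult_neq_0_inv in H as [H _].
  exact (proj2 (Cmult_neq_0_inv _ _ H)).
Qed.

Lemma Cmult4_neq0_perm (w x y z : C) : w * x * y * z <> 0 -> x * w * y * z <> 0 /\ y * x * w * z <> 0.
Proof.
  intros H; split; intro E; apply H; rewrite <- E; ring.
Qed.

Lemma first_identity (q a b c d e : C) N :
  (0 < Cmod q < 1)%R -> a = Cpow q (S N) \/ b = Cpow q (S N) \/ c = Cpow q (S N) ->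
  a <> 0 -> b <> 0 -> c <> 0 -> d <> 0 -> e <> 0 ->
  (forall k, qprod_pos a q k <> 0) -> (forall k, qprod_pos b q k <> 0) ->
  (forall k, qprod_pos c q k <> 0) -> (forall k, qprod_pos d q k <> 0) ->
  (forall k, qprod_pos e q k <> 0) ->
  qpoch_inf a q * qpoch_inf b q * qpoch_inf c q * qpoch_inf (a * b * c / (q * q)) q <> 0 ->
  (forall k, qprod_pos q q k * qprod_pos (q * q * q / (a * b * c)) q k
               * qprod_pos d q k * qprod_pos e q k <> 0) ->
  bilateral_identity (first_series_term q a b c d e) (first_bilateral_term q a b c d e)
    (first_prefactor q a b c).
Proof.
  intros Hq Hpow Ha Hb Hc Hd He HPa HPb HPc HPd HPe Hinf Hden.
  assert (HPabc : forall k, qprod_pos (q * q * q / (a * b * c)) q k <> 0)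
    by (intro k; exact (Cmult4_neq0_2 _ _ _ _ (Hden k))).
  destruct (Cmult4_neq0_perm _ _ _ _ Hinf) as [Hinf12 Hinf13].
  destruct Hpow as [Ea | [Eb | Ec]].
  - apply first_identity_qpow with N; auto.
  - apply first_identity_swap12, first_identity_qpow with N; auto;
      replace (b * a * c) with (a * b * c) by ring; auto.
  - apply first_identity_swap13, first_identity_qpow with N; auto;
      replace (c * b * a) with (a * b * c) by ring; auto.
Qed.

Lemma second_identity (q a b c d e : C) N :
  (0 < Cmod q < 1)%R -> a = Cpow q (S N) \/ b = Cpow q (S N) \/ c = Cpow q (S N) ->
  a <> 0 -> b <> 0 -> c <> 0 -> d <> 0 -> e <> 0 ->
  1 - a <> 0 -> 1 - b <> 0 -> 1 - c <> 0 -> 1 - d <> 0 -> 1 - e <> 0 ->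
  (forall k, qprod_pos (a * q) q k <> 0) -> (forall k, qprod_pos (b * q) q k <> 0) ->
  (forall k, qprod_pos (c * q) q k <> 0) -> (forall k, qprod_pos (d * q) q k <> 0) ->
  (forall k, qprod_pos (e * q) q k <> 0) ->
  qpoch_inf (a * q) q * qpoch_inf (b * q) q * qpoch_inf (c * q) q * qpoch_inf (a * b * c / q) q <> 0 ->
  (forall k, qprod_pos q q k * qprod_pos (q * q / (a * b * c)) q k
               * qprod_pos (d * q) q k * qprod_pos (e * q) q k <> 0) ->
  bilateral_identity (second_series_term q a b c d e) (second_bilateral_term q a b c d e)
    (second_prefactor q a b c).
Proof.
  intros Hq Hpow Ha Hb Hc Hd He H1a H1b H1c H1d H1e HPa HPb HPc HPd HPe Hinf Hden.
  assert (HPabc : forall k, qprod_pos (q * q / (a * b * c)) q k <> 0)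
    by (intro k; exact (Cmult4_neq0_2 _ _ _ _ (Hden k))).
  destruct (Cmult4_neq0_perm _ _ _ _ Hinf) as [Hinf12 Hinf13].
  destruct Hpow as [Ea | [Eb | Ec]].
  - apply second_identity_qpow with N; auto.
  - apply second_identity_swap12, second_identity_qpow with N; auto;
      replace (b * a * c) with (a * b * c) by ring; auto.
  - apply second_identity_swap13, second_identity_qpow with N; auto;
      replace (c * b * a) with (a * b * c) by ring; auto.
Qed.

Lemma qprod_pos_neq0_of_rec_def (x q : C) :
  (forall k : Z, qpoch_rec_def x q k) -> forall k : nat, qprod_pos x q k <> 0.
Proof.
  intros H k. specialize (H (Z.of_nat k)).
  destruct k; simpl in *; auto. rewrite SuccNat2Pos.id_succ in H. exact H.
Qed.

Lemma one_sub_neq0_of_def (q x : C) : q <> 0 -> qpoch_def (q / x) q (-1) -> 1 - x <> 0.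
Proof.
  intros Hq H E. apply H.
  assert (Ex : x = 1) by (replace x with (1 - (1 - x)) by ring; rewrite E; ring).
  subst x. simpl. field. auto.
Qed.

Theorem theorem1p1 (q a b c d e : C) :
  (0 < Cmod q < 1)%R ->
  (exists n : nat, (1 <= n)%nat /\ (a = Cpow q n \/ b = Cpow q n \/ c = Cpow q n)) ->
  a <> 0 -> b <> 0 -> c <> 0 -> d <> 0 -> e <> 0 ->
  ((* first identity: all terms well defined *)
  (forall k : Z,
     qpoch_def (q / a) q k /\ qpoch_def (q / b) q k /\ qpoch_def (q / c) q k /\
     qpoch_def (q / d) q k /\ qpoch_def (q / e) q k /\
     qpoch_rec_def a q k /\ qpoch_rec_def b q k /\ qpoch_rec_def c q k /\
     qpoch_rec_def d q k /\ qpoch_rec_def e q k) ->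
  qpoch_inf a q * qpoch_inf b q * qpoch_inf c q * qpoch_inf (a * b * c / (q * q)) q <> 0 ->
  (forall k : nat,
     qprod_pos q q k * qprod_pos (q * q * q / (a * b * c)) q k
       * qprod_pos d q k * qprod_pos e q k <> 0) ->
  (exists S : C,
     is_series (fun k : nat =>
       qprod_pos (q / a) q k * qprod_pos (q / b) q k * qprod_pos (q / c) q k
         * qprod_pos (d * e / q) q k
       / (qprod_pos q q k * qprod_pos (q * q * q / (a * b * c)) q k
            * qprod_pos d q k * qprod_pos e q k)
       * Cpow q k) S /\
     is_bilateral_series (fun k : Z =>
       qpoch (q / a) q k * qpoch (q / b) q k * qpoch (q / c) q k
         * qpoch (q / d) q k * qpoch (q / e) q k
       * (qpoch_rec a q k * qpoch_rec b q k * qpoch_rec c q k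
            * qpoch_rec d q k * qpoch_rec e q k)
       * Czpow (a * b * c * d * e / (q * q * q)) k)
       (qpoch_inf q q * qpoch_inf (a * b / q) q * qpoch_inf (b * c / q) q
          * qpoch_inf (a * c / q) q
        / (qpoch_inf a q * qpoch_inf b q * qpoch_inf c q
             * qpoch_inf (a * b * c / (q * q)) q)
        * S))) /\
  ((* second identity: all terms well defined *)
  (forall k : Z,
     qpoch_def (q / a) q k /\ qpoch_def (q / b) q k /\ qpoch_def (q / c) q k /\
     qpoch_def (q / d) q k /\ qpoch_def (q / e) q k /\
     qpoch_rec_def (a * q) q k /\ qpoch_rec_def (b * q) q k /\ qpoch_rec_def (c * q) q k /\
     qpoch_rec_def (d * q) q k /\ qpoch_rec_def (e * q) q k) ->
  qpoch_inf (a * q) q * qpoch_inf (b * q) q * qpoch_inf (c * q) q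
    * qpoch_inf (a * b * c / q) q <> 0 ->
  (forall k : nat,
     qprod_pos q q k * qprod_pos (q * q / (a * b * c)) q k
       * qprod_pos (d * q) q k * qprod_pos (e * q) q k <> 0) ->
  (exists S : C,
     is_series (fun k : nat =>
       qprod_pos (q / a) q k * qprod_pos (q / b) q k * qprod_pos (q / c) q k
         * qprod_pos (d * e) q k
       / (qprod_pos q q k * qprod_pos (q * q / (a * b * c)) q k
            * qprod_pos (d * q) q k * qprod_pos (e * q) q k)
       * Cpow q k) S /\
     is_bilateral_series (fun k : Z =>
       qpoch (q / a) q k * qpoch (q / b) q k * qpoch (q / c) q k
         * qpoch (q / d) q k * qpoch (q / e) q k
       * (qpoch_rec (a * q) q k * qpoch_rec (b * q) q k * qpoch_rec (c * q) q k
            * qpoch_rec (d * q) q k * qpoch_rec (e * q) q k)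
       * Czpow (a * b * c * d * e / q) k)
       (qpoch_inf q q * qpoch_inf (a * b) q * qpoch_inf (b * c) q
          * qpoch_inf (a * c) q
        / (qpoch_inf (a * q) q * qpoch_inf (b * q) q * qpoch_inf (c * q) q
             * qpoch_inf (a * b * c / q) q)
        * S))).
Proof.
  intros Hq [[|N] [Hn Hpow]] Ha Hb Hc Hd He; [lia|].
  assert (Hq0 : q <> 0) by (apply Cmod_gt_0, Hq).
  split; intros Hdef Hinf Hden.
  - apply (first_identity q a b c d e N); auto;
      apply qprod_pos_neq0_of_rec_def; intro k; apply Hdef.
  - apply (second_identity q a b c d e N); auto;
      first [ apply qprod_pos_neq0_of_rec_def; intro k; apply Hdef
            | apply (one_sub_neq0_of_def q); auto; apply Hdef ].
Qed.
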